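(* Let $G$ be a split graph with vertex set partitioned as $I^*\cup K$, where $K$ is a clique and $I^*$ is an independent set with $|I^*|=\alpha(G)$, and let $H$ be a graph. Then $\gamma_{gr}(G\circ H)= |I^*|\gamma_{gr}(H)+n(G)$.
   Context: $\alpha(G)$ is the independence number and $N(v)$ the open neighborhood. $n(G)=1$ if there exist $v,w\in K$ with $N(v)\cap N(w)\cap I^*=\emptyset$, and $n(G)=0$ otherwise. The lexicographic product $G\circ H$ has vertex set $V(G)\times V(H)$, with $(g_1,h_1)$ adjacent to $(g_2,h_2)$ iff $g_1g_2\in E(G)$, or $g_1=g_2$ and $h_1h_2\in E(H)$. $\gamma_{gr}$ is the Grundy domination number: the maximum length of a sequence $(v_1,\dots,v_k)$ of distinct vertices whose set is dominating and such that each $N[v_i]\setminus\bigcup_{j<i}N[v_j]$ is non-empty ($N[\cdot]$ the closed neighborhood). *)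

From mathcomp Require Import all_boot all_order.
Set Implicit Arguments. Unset Strict Implicit. Unset Printing Implicit Defensive.

Section Graphs.
Variable T : finType.
Implicit Types (e : rel T) (S : {set T}).

Definition simple_graph e := irreflexive e /\ symmetric e.

Definition onbhd e (v : T) : {set T} := [set u | e v u].
Definition cnbhd e (v : T) : {set T} := [set u | (u == v) || e v u].

Definition independent e S := [forall u in S, forall v in S, ~~ e u v].
Definition clique e S := [forall u in S, forall v in S, (u != v) ==> e u v].

Definition alpha e : nat := \max_(S : {set T} | independent e S) #|S|.

Fixpoint footprinting e (covered : {set T}) (s : seq T) : bool :=
  match s with
  | [::] => true
  | v :: s' => ~~ (cnbhd e v \subset covered)
               && footprinting e (covered :|: cnbhd e v) s'
  end.

Definition dominating_seq e (s : seq T) : bool :=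
  [set: T] \subset \bigcup_(v <- s) cnbhd e v.

Definition grundy_dom_seq e (s : seq T) : bool :=
  [&& uniq s, dominating_seq e s & footprinting e set0 s].

(* Grundy domination number: maximum length of a Grundy dominating sequence
   (lengths are bounded by #|T| since the vertices are distinct) *)
Definition grundy_dom e : nat :=
  \max_(k < #|T|.+1 | [exists t : k.-tuple T, grundy_dom_seq e t]) k.

Definition nG e (I K : {set T}) : nat :=
  [exists v in K, exists w in K, onbhd e v :&: onbhd e w :&: I == set0].

End Graphs.

Definition lexprod (T U : finType) (eG : rel T) (eH : rel U) : rel (T * U) :=
  fun x y => eG x.1 y.1 || ((x.1 == y.1) && eH x.2 y.2).

From mathcomp Require Import all_boot all_order zify.
Set Implicit Arguments. Unset Strict Implicit. Unset Printing Implicit Defensive.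

(** A footprinting sequence of G o H, read after a set D of vertices has been chosen, is
    bounded by a potential: each layer {x} x V(H) with x in I* contributes the Grundy
    number of H relative to the part of the layer already dominated, and the clique K
    contributes a term that is n(G) before any K-layer is hit.  Each new vertex strictly
    decreases the potential; the key point is that every vertex of K has a neighbour in I*,
    since I* is a maximum independent set.  Conversely, a Grundy sequence of H repeated in
    every I*-layer reaches |I*| gamma_gr(H), and if v, w in K have no common neighbour in
    I*, a vertex (v, h) played after the layers of I* \ N(w) and before those of
    I* cap N(w) footprints (w, h). *)

Lemma leq_sum_drop (J : finType) (A : {pred J}) (F G : J -> nat) j :
  j \in A -> (forall i, F i <= G i) ->
  \sum_(i in A) F i + (G j - F j) <= \sum_(i in A) G i.
Proof.
move=> jA leFG; rewrite (bigD1 j) //= [X in _ <= X](bigD1 j) //=.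
have : \sum_(i in A | i != j) F i <= \sum_(i in A | i != j) G i by exact: leq_sum.
have := leFG j; lia.
Qed.

Section Footprinting.
Variables (T : finType) (e : rel T).
Implicit Types (C D : {set T}) (s : seq T).

Definition cover D : {set T} := \bigcup_(d in D) cnbhd e d.

Definition grundy_from C : nat :=
  \max_(k < #|T|.+1 | [exists t : k.-tuple T, footprinting e C t]) k.

Lemma mem_cnbhd_self v : v \in cnbhd e v.
Proof. by rewrite inE eqxx. Qed.

Lemma cover0 : cover set0 = set0.
Proof. exact: big_set0. Qed.

Lemma cover_setU1 v D : cover (v |: D) = cnbhd e v :|: cover D.
Proof. by rewrite /cover bigcup_setU big_set1. Qed.

Lemma footprinting_cat C s1 s2 :
  footprinting e C (s1 ++ s2) =
  footprinting e C s1 && footprinting e (C :|: \bigcup_(v <- s1) cnbhd e v) s2.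
Proof.
elim: s1 C => [|v s1 IH] C /=; first by rewrite big_nil setU0.
by rewrite IH big_cons setUA andbA.
Qed.

Lemma footprinting_subset C C' s :
  C \subset C' -> footprinting e C' s -> footprinting e C s.
Proof.
elim: s C C' => [|v s IH] C C' //= sCC' /andP[fresh fp].
rewrite (IH _ (C' :|: cnbhd e v)) ?setSU // andbT.
by apply: contra fresh => /subset_trans; apply.
Qed.

Lemma footprinting_fresh C s x :
  footprinting e C s -> x \in s -> ~~ (cnbhd e x \subset C).
Proof.
elim: s C => [|v s IH] C //= /andP[fresh fp]; rewrite in_cons.
case/orP=> [/eqP->//|xs]; apply: contra (IH _ fp xs) => /subset_trans; apply.
exact: subsetUl.
Qed.

Lemma footprinting_uniq C s : footprinting e C s -> uniq s.
Proof.
elim: s C => [|v s IH] C //= /andP[_ fp]; rewrite (IH _ fp) andbT.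
by apply/negP => /(footprinting_fresh fp); rewrite subsetUr.
Qed.

Lemma leq_size_bigmax_tuple (P : pred (seq T)) s : uniq s -> P s ->
  size s <= \max_(k < #|T|.+1 | [exists t : k.-tuple T, P t]) k.
Proof.
move=> /card_uniqP card_s Ps; have lt_s : size s < #|T|.+1 by rewrite ltnS -card_s max_card.
apply: (@leq_bigmax_cond _ _ (fun k : 'I_#|T|.+1 => nat_of_ord k) (Ordinal lt_s)).
by apply/existsP; exists (in_tuple s).
Qed.

Lemma leq_size_grundy_from C s : footprinting e C s -> size s <= grundy_from C.
Proof. by move=> fp; apply: leq_size_bigmax_tuple (footprinting_uniq fp) fp. Qed.

Lemma grundy_from_leq C n :
  (forall s, footprinting e C s -> size s <= n) -> grundy_from C <= n.
Proof.
move=> bound; apply/bigmax_leqP => k /existsP[t fp].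
by rewrite -(size_tuple t); exact: bound.
Qed.

Lemma grundy_from_witness C : exists2 s, footprinting e C s & size s = grundy_from C.
Proof.
have fp_nil : [exists t : 0.-tuple T, footprinting e C t] by apply/existsP; exists [tuple].
rewrite /grundy_from (bigmax_eq_arg (ord0 : 'I_#|T|.+1)) //.
by case: arg_maxnP => // k /existsP[t fp] _; exists t; rewrite ?size_tuple.
Qed.

Lemma grundy_fromS C C' : C \subset C' -> grundy_from C' <= grundy_from C.
Proof.
move=> sCC'; apply: grundy_from_leq => s fp.
by apply: leq_size_grundy_from; exact: footprinting_subset fp.
Qed.

Lemma grundy_from_step C v :
  ~~ (cnbhd e v \subset C) -> grundy_from (C :|: cnbhd e v) < grundy_from C.
Proof.
move=> fresh; have [s fp <-] := grundy_from_witness (C :|: cnbhd e v).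
by apply: (@leq_size_grundy_from _ (v :: s)); rewrite /= fresh.
Qed.

Lemma grundy_fromT : grundy_from setT = 0.
Proof. by apply/eqP; rewrite -leqn0; apply: grundy_from_leq => -[|v s] //=; rewrite subsetT. Qed.

Lemma grundy_from_gt0 C : C != setT -> 0 < grundy_from C.
Proof.
rewrite -subTset => /subsetPn[x _ xC].
apply: (@leq_size_grundy_from _ [:: x]); rewrite /= andbT.
by apply/subsetPn; exists x; rewrite ?mem_cnbhd_self.
Qed.

Lemma grundy_domE : grundy_dom e = grundy_from set0.
Proof.
apply/eqP; rewrite eqn_leq; apply/andP; split.
  apply/bigmax_leqP => k /existsP[t /and3P[_ _ fp]].
  by rewrite -(size_tuple t); exact: leq_size_grundy_from.
have [s fp size_s] := grundy_from_witness set0.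
suff dom_s : dominating_seq e s.
  rewrite -size_s; apply: leq_size_bigmax_tuple (footprinting_uniq fp) _.
  by rewrite /grundy_dom_seq (footprinting_uniq fp) dom_s.
apply/subsetP => x _; apply/negPn/negP => xn.
have fp' : footprinting e set0 (rcons s x).
  rewrite -cats1 footprinting_cat fp /= set0U andbT.
  by apply/subsetPn; exists x; rewrite ?mem_cnbhd_self.
by have := leq_size_grundy_from fp'; rewrite size_rcons size_s ltnn.
Qed.

End Footprinting.

Section LexprodLayers.
Context {T U : finType} {eG : rel T} {eH : rel U}.
Local Notation e := (lexprod eG eH).
Implicit Types (X : {set T * U}) (D : {set T * U}).

Definition layer X (a : T) : {set U} := [set u | (a, u) \in X].

Lemma mem_cnbhd_lexprod g h a u :
  ((a, u) \in cnbhd e (g, h)) = eG g a || (a == g) && (u \in cnbhd eH h).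
Proof.
rewrite !inE xpair_eqE /lexprod /= [g == a]eq_sym.
by case: (a == g); case: (eG g a); rewrite ?orbT ?orbF.
Qed.

Lemma layer_setU X Y a : layer (X :|: Y) a = layer X a :|: layer Y a.
Proof. by apply/setP => u; rewrite !inE. Qed.

Lemma layer_eq0_notin X a u : layer X a = set0 -> (a, u) \notin X.
Proof. by move=> X_a0; have := in_set0 u; rewrite -X_a0 inE => ->. Qed.

Lemma layer_cnbhd g h a :
  layer (cnbhd e (g, h)) a = if eG g a then setT else if a == g then cnbhd eH h else set0.
Proof.
apply/setP => u; rewrite inE mem_cnbhd_lexprod.
by case: (eG g a); case: (a == g); rewrite ?inE.
Qed.

Lemma layer_coverS D D' a : D \subset D' -> layer (cover e D) a \subset layer (cover e D') a.
Proof.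
move=> sDD'; apply/subsetP => u; rewrite !inE => /bigcupP[d dD ud].
by apply/bigcupP; exists d => //; exact: subsetP sDD' d dD.
Qed.

Lemma layer_cover_full D d a : d \in D -> eG d.1 a -> layer (cover e D) a = setT.
Proof.
case: d => g h dD ga; apply/setP => u; rewrite !inE; apply/bigcupP.
by exists (g, h); rewrite // mem_cnbhd_lexprod ga.
Qed.

Lemma layer_cover_eq0 D a :
  (forall d, d \in D -> (d.1 != a) && ~~ eG d.1 a) -> layer (cover e D) a = set0.
Proof.
move=> far; apply/setP => u; rewrite !inE; apply/bigcupP => -[[g h] /far /andP[ga nga]].
by rewrite mem_cnbhd_lexprod (negbTE nga) eq_sym (negbTE ga).
Qed.

Lemma cover_allpairs (xs : seq T) (t : seq U) a u :
  (a, u) \in \bigcup_(v <- [seq (x, y) | x <- xs, y <- t]) cnbhd e v ->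
  exists2 x, x \in xs & (a == x) || eG x a.
Proof.
rewrite bigcup_seq => /bigcupP[_ /allpairsP[[x y] [xs_x _ ->]]].
by rewrite mem_cnbhd_lexprod => /orP[ga|/andP[/eqP-> _]]; exists x; rewrite ?ga ?eqxx ?orbT.
Qed.

Hypothesis eG_irr : irreflexive eG.

Lemma footprinting_layer x t C X :
  footprinting eH C t -> layer X x = C -> footprinting e X [seq (x, y) | y <- t].
Proof.
elim: t C X => [|h t IH] C X //= /andP[fresh fp] XC; apply/andP; split.
  apply: contra fresh => /subsetP sub; apply/subsetP => u uh; rewrite -XC inE.
  by apply: sub; rewrite mem_cnbhd_lexprod eqxx uh orbT.
by apply: IH fp _; rewrite layer_setU XC layer_cnbhd eG_irr eqxx.
Qed.

Lemma footprinting_allpairs (xs : seq T) (t : seq U) X :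
  footprinting eH set0 t -> uniq xs -> {in xs &, forall x y, ~~ eG x y} ->
  {in xs, forall x, layer X x = set0} ->
  footprinting e X [seq (x, y) | x <- xs, y <- t].
Proof.
move=> fp; elim: xs X => [|x xs IH] X //= /andP[xn_xs uniq_xs] indep fresh.
rewrite footprinting_cat (footprinting_layer fp) ?fresh ?mem_head //=.
have xs_sub y : y \in xs -> y \in x :: xs by rewrite in_cons orbC => ->.
apply: IH => // [y z ys zs|y ys]; first by apply: indep; exact: xs_sub.
rewrite layer_setU fresh ?xs_sub // set0U; apply/setP => u; rewrite !inE.
have yx : y != x by apply: contraNneq xn_xs => <-.
rewrite bigcup_seq; apply/bigcupP => -[_ /mapP[h _ ->]].
by rewrite mem_cnbhd_lexprod (negbTE yx) (negbTE (indep _ _ (mem_head _ _) (xs_sub _ ys))).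
Qed.

End LexprodLayers.

Section SplitLexprod.
Variables (T U : finType) (eG : rel T) (eH : rel U) (I K : {set T}).
Hypotheses (eG_simple : simple_graph eG) (U_gt0 : 0 < #|U|)
  (IK_disjoint : I :&: K = set0) (IK_union : I :|: K = [set: T])
  (K_clique : clique eG K) (I_indep : independent eG I) (I_max : #|I| = alpha eG).

Local Notation e := (lexprod eG eH).
Local Notation gammaH := (grundy_from eH set0).
Implicit Types (D : {set T * U}).

Lemma eG_irr : irreflexive eG. Proof. by case: eG_simple. Qed.
Lemma eG_sym : symmetric eG. Proof. by case: eG_simple. Qed.

Lemma inK x : (x \in K) = (x \notin I).
Proof.
apply/idP/idP => [xK|xNI]; last by move: (in_setT x); rewrite -IK_union inE (negbTE xNI).
by apply/negP => xI; have := in_set0 x; rewrite -IK_disjoint inE xI xK.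
Qed.

Lemma IK_neq x k : x \in I -> k \in K -> (x == k) = false.
Proof. by move=> xI kK; apply: contraTF xI => /eqP->; rewrite -inK. Qed.

Lemma clique_adj k k' : k \in K -> k' \in K -> k != k' -> eG k k'.
Proof.
by move=> kK k'K; move/forall_inP/(_ k kK)/forall_inP/(_ k' k'K): K_clique => /implyP.
Qed.

Lemma indep_nadj x y : x \in I -> y \in I -> eG x y = false.
Proof. by move=> xI yI; move/forall_inP/(_ x xI)/forall_inP/(_ y yI)/negbTE: I_indep. Qed.

Lemma K_nbr_in_I k : k \in K -> exists2 x, x \in I & eG k x.
Proof.
move=> kK; apply/exists_inP; apply: contraT => /exists_inPn noI.
have indep_kI : independent eG (k |: I).
  apply/forall_inP => x /setU1P xkI; apply/forall_inP => y /setU1P ykI.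
  case: xkI ykI => [->|xI] [->|yI]; rewrite ?eG_irr //.
  - exact: noI.
  - by rewrite eG_sym; exact: noI.
  - by rewrite indep_nadj.
have := @leq_bigmax_cond _ (independent eG) (fun S => #|S|) _ indep_kI.
by rewrite -/(alpha eG) -I_max cardsU1 -inK kK ltnn.
Qed.

Lemma nG_eq0_common_nbr v w : nG eG I K = 0 -> v \in K -> w \in K ->
  exists2 x, x \in I & eG v x && eG w x.
Proof.
move=> nG0 vK wK; apply/exists_inP; apply: contraT => /exists_inPn none.
move: nG0; rewrite /nG; case: exists_inP => // -[]; exists v => //.
apply/exists_inP; exists w => //; apply/eqP/setP => x.
by rewrite !inE andbC; apply/negP => /andP[/none/negP].
Qed.

Lemma gammaH_gt0 : 0 < gammaH.
Proof.
have [u _] := card_gt0P U_gt0.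
by apply: grundy_from_gt0; apply/eqP => /setP/(_ u); rewrite !inE.
Qed.

Definition layer_grundy D a := grundy_from eH (layer (cover e D) a).

Definition hitK D := [set k in K | [exists u, (k, u) \in D]].

(* Once one K-layer k is hit, all other K-layers are dominated, so only layer k can still
   be footprinted; once two are hit, none can. *)
Definition clique_term D : nat :=
  match #|hitK D| with
  | 0 => nG eG I K
  | 1 => \sum_(k in hitK D) layer_grundy D k
  | _.+2 => 0
  end.

Definition potential D := \sum_(x in I) layer_grundy D x + clique_term D.

Lemma clique_term_set0 D : hitK D = set0 -> clique_term D = nG eG I K.
Proof. by rewrite /clique_term => ->; rewrite cards0. Qed.

Lemma clique_term_set1 D k : hitK D = [set k] -> clique_term D = layer_grundy D k.
Proof. by rewrite /clique_term => ->; rewrite cards1 big_set1. Qed.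

Lemma clique_term_gt1 D : 1 < #|hitK D| -> clique_term D = 0.
Proof. by rewrite /clique_term; case: #|hitK D| => [|[]]. Qed.

Lemma hitK_setU1 D g h :
  hitK ((g, h) |: D) = if g \in K then g |: hitK D else hitK D.
Proof.
apply/setP => k; have [->|kg] := eqVneq k g.
  case: ifP => gK; rewrite !inE gK ?eqxx //=.
  by apply/existsP; exists h; rewrite setU11.
have hitD'_k : [exists u, (k, u) \in (g, h) |: D] = [exists u, (k, u) \in D].
  by apply: eq_existsb => u; rewrite !inE xpair_eqE (negbTE kg).
by case: ifP => _; rewrite !inE ?(negbTE kg) hitD'_k.
Qed.

Lemma mem_hitK D d : d \in D -> d.1 \in K -> d.1 \in hitK D.
Proof. by case: d => g h dD gK; rewrite inE gK; apply/existsP; exists h. Qed.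

Lemma hitK_sub D : hitK D \subset K.
Proof. by apply/subsetP => k; rewrite inE => /andP[]. Qed.

Lemma hitK_eq0_I D d : hitK D = set0 -> d \in D -> d.1 \in I.
Proof.
move=> hit0 dD; rewrite -[_ \in I]negbK -inK; apply/negP => /(mem_hitK dD).
by rewrite hit0 inE.
Qed.

Lemma hitK_full D k a : k \in hitK D -> eG k a -> layer (cover e D) a = setT.
Proof. by rewrite inE => /andP[_ /existsP[u ku]]; exact: (layer_cover_full ku). Qed.

Lemma layer_grundyS D D' a : D \subset D' -> layer_grundy D' a <= layer_grundy D a.
Proof. by move=> sDD'; apply: grundy_fromS; exact: layer_coverS. Qed.

Lemma layer_grundy_gt0 D a u : u \notin layer (cover e D) a -> 0 < layer_grundy D a.
Proof. by move=> uN; apply: grundy_from_gt0; apply: contraNneq uN => ->. Qed.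

Lemma layer_grundy_adj D d a : d \in D -> eG d.1 a -> layer_grundy D a = 0.
Proof. by move=> dD da; rewrite /layer_grundy (layer_cover_full dD da) grundy_fromT. Qed.

Lemma layer_grundy_drop D g h a u :
  (a, u) \in cnbhd e (g, h) -> (a, u) \notin cover e D ->
  layer_grundy ((g, h) |: D) a < layer_grundy D a.
Proof.
move=> fp fresh; have uN : u \notin layer (cover e D) a by rewrite inE.
rewrite mem_cnbhd_lexprod in fp; case/orP: fp => [ga|/andP[/eqP ag uh]].
  by rewrite (@layer_grundy_adj _ (g, h)) ?setU11 //; exact: layer_grundy_gt0 uN.
rewrite /layer_grundy cover_setU1 layer_setU layer_cnbhd ag eG_irr eqxx setUC.
by apply: grundy_from_step; apply/subsetPn; exists u; rewrite -?ag.
Qed.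

Lemma clique_termS D D' : D \subset D' -> hitK D' = hitK D -> clique_term D' <= clique_term D.
Proof.
move=> sDD' hitDD'; rewrite /clique_term hitDD'.
by case: #|hitK D| => [|[|]] //; apply: leq_sum => k _; exact: layer_grundyS.
Qed.

Section PotentialStep.
Variables (D : {set T * U}) (g : T) (h : U).
Local Notation D' := ((g, h) |: D).

Lemma sub_setU1 : D \subset D'.
Proof. exact: subsetUr. Qed.

Lemma potential_drop_I a u :
  (a, u) \in cnbhd e (g, h) -> (a, u) \notin cover e D -> a \in I ->
  clique_term D' <= clique_term D -> potential D' < potential D.
Proof.
move=> fp fresh aI le_clique; rewrite /potential.
have := leq_sum_drop aI (fun x => layer_grundyS x sub_setU1).
have := layer_grundy_drop fp fresh; lia.
Qed.

Lemma potential_drop_clique : clique_term D' < clique_term D -> potential D' < potential D.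
Proof.
rewrite /potential => lt_clique.
have : \sum_(x in I) layer_grundy D' x <= \sum_(x in I) layer_grundy D x.
  by apply: leq_sum => x _; exact: layer_grundyS sub_setU1.
lia.
Qed.

Lemma potential_step_K_free : g \in K -> hitK D = set0 ->
  (forall d, d \in D -> ~~ eG d.1 g) -> potential D' < potential D.
Proof.
move=> gK hit0 nadj; have [x xI gx] := K_nbr_in_I gK.
have DI d : d \in D -> d.1 \in I := hitK_eq0_I hit0.
have layer_g0 : layer (cover e D) g = set0.
  apply: layer_cover_eq0 => d dD; rewrite nadj // andbT.
  by apply: contraTneq (DI d dD) => ->; rewrite -inK.
have layer_x0 : layer (cover e D) x = set0.
  apply: layer_cover_eq0 => d dD; rewrite indep_nadj ?DI // andbT.
  by apply: contraTneq (nadj d dD) => ->; rewrite eG_sym gx.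
have drop_g : clique_term D' < gammaH.
  have fresh_g : (g, h) \notin cover e D by exact: layer_eq0_notin layer_g0.
  rewrite (@clique_term_set1 _ g); last by rewrite hitK_setU1 gK hit0 setU0.
  by have := layer_grundy_drop (mem_cnbhd_self _ _) fresh_g; rewrite /layer_grundy layer_g0.
have lgD'x : layer_grundy D' x = 0 by apply: (@layer_grundy_adj _ (g, h)); rewrite ?setU11.
have lgDx : layer_grundy D x = gammaH by rewrite /layer_grundy layer_x0.
have := leq_sum_drop xI (fun y => layer_grundyS y sub_setU1).
rewrite /potential lgD'x lgDx; lia.
Qed.

Variables (a : T) (u : U).
Hypotheses (fp : (a, u) \in cnbhd e (g, h)) (fresh : (a, u) \notin cover e D).

Lemma fp_src : (a == g) || eG g a.
Proof. by move: fp; rewrite mem_cnbhd_lexprod orbC => /orP[/andP[->]|->]; rewrite ?orbT. Qed.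

Lemma fresh_layer : u \notin layer (cover e D) a.
Proof. by rewrite inE. Qed.

Lemma fresh_nadj d : d \in D -> eG d.1 a = false.
Proof.
move=> dD; apply/negP => /(layer_cover_full dD) full.
by move: fresh_layer; rewrite full inE.
Qed.

Lemma fresh_hitK : a \in K -> hitK D != set0 -> hitK D = [set a].
Proof.
move=> aK hitN0; apply/eqP; rewrite -[_ == _]orbF -(negbTE hitN0) -subset1.
apply/subsetP => k khit; rewrite inE; apply: contraTT fresh_layer => ka.
by rewrite (hitK_full khit (clique_adj (subsetP (hitK_sub D) _ khit) aK ka)) inE.
Qed.

Lemma potential_step_I : g \in I -> potential D' < potential D.
Proof.
move=> gI; have hitD' : hitK D' = hitK D by rewrite hitK_setU1 inK gI.
have le_clique := clique_termS sub_setU1 hitD'.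
have [aI|aK] := boolP (a \in I); first exact: potential_drop_I fp fresh aI le_clique.
rewrite -inK in aK; have [hit0|hitN0] := eqVneq (hitK D) set0.
  have ga : eG g a by case/orP: fp_src => // /eqP ag; move: aK; rewrite ag inK gI.
  have layer_g0 : layer (cover e D) g = set0.
    apply: layer_cover_eq0 => d dD; have dI := hitK_eq0_I hit0 dD.
    by rewrite indep_nadj // andbT; apply: contraFneq (fresh_nadj dD) => ->.
  have fresh_g : (g, h) \notin cover e D by exact: layer_eq0_notin layer_g0.
  exact: potential_drop_I (mem_cnbhd_self _ _) fresh_g gI le_clique.
apply: potential_drop_clique; have hit_a := fresh_hitK aK hitN0.
rewrite (clique_term_set1 hit_a) (@clique_term_set1 _ a) ?hitD' //.
exact: layer_grundy_drop fp fresh.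
Qed.

Lemma potential_step_K_first : g \in K -> hitK D = set0 -> potential D' < potential D.
Proof.
move=> gK hit0; case: (boolP [exists d in D, eG d.1 g]); last first.
  by move/exists_inPn; exact: potential_step_K_free.
case/exists_inP => d dD dg.
have clique0 : clique_term D' = 0.
  rewrite (@clique_term_set1 _ g); last by rewrite hitK_setU1 gK hit0 setU0.
  by apply: (layer_grundy_adj (setU1r _ dD)).
have [aI|aK] := boolP (a \in I).
  by apply: potential_drop_I fp fresh aI _; rewrite clique0.
rewrite -inK in aK; have ga : eG g a.
  by case/orP: fp_src => // /eqP ag; move: (fresh_nadj dD); rewrite ag dg.
have [nG0|] := eqVneq (nG eG I K) 0; last first.
  by move=> nG1; apply: potential_drop_clique; rewrite clique0 clique_term_set0 // lt0n.
have [x xI /andP[gx ax]] := nG_eq0_common_nbr nG0 gK aK.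
have layer_x0 : layer (cover e D) x = set0.
  apply: layer_cover_eq0 => d' d'D; rewrite indep_nadj ?(hitK_eq0_I hit0) // andbT.
  by apply: contraFneq (fresh_nadj d'D) => ->; rewrite eG_sym.
have lgD'x : layer_grundy D' x = 0 by apply: (@layer_grundy_adj _ (g, h)); rewrite ?setU11.
have lgDx : layer_grundy D x = gammaH by rewrite /layer_grundy layer_x0.
have := leq_sum_drop xI (fun y => layer_grundyS y sub_setU1).
rewrite /potential lgD'x lgDx clique0 clique_term_set0 // nG0; have := gammaH_gt0; lia.
Qed.

Lemma potential_step_K_second k : g \in K -> hitK D = [set k] -> potential D' < potential D.
Proof.
move=> gK hit_k; have [gk|gNk] := eqVneq g k.
  have hitD' : hitK D' = hitK D by rewrite hitK_setU1 gK hit_k gk setUid.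
  have [aI|aK] := boolP (a \in I).
    exact: potential_drop_I fp fresh aI (clique_termS sub_setU1 hitD').
  rewrite -inK in aK; have hit_a : hitK D = [set a].
    by apply: fresh_hitK; rewrite // -cards_eq0 hit_k cards1.
  apply: potential_drop_clique.
  rewrite (clique_term_set1 hit_a) (@clique_term_set1 _ a) ?hitD' //.
  exact: layer_grundy_drop fp fresh.
have clique0 : clique_term D' = 0.
  by apply: clique_term_gt1; rewrite hitK_setU1 gK hit_k cards2 gNk.
have [aI|aK] := boolP (a \in I).
  by apply: potential_drop_I fp fresh aI _; rewrite clique0.
rewrite -inK in aK; have hit_a : hitK D = [set a].
  by apply: fresh_hitK; rewrite // -cards_eq0 hit_k cards1.
apply: potential_drop_clique; rewrite clique0 (clique_term_set1 hit_a).
exact: layer_grundy_gt0 fresh_layer.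
Qed.

Lemma potential_step_K_many : 1 < #|hitK D| -> potential D' < potential D.
Proof.
move=> hit_gt1; have [aI|aK] := boolP (a \in I).
  apply: potential_drop_I fp fresh aI _; rewrite !clique_term_gt1 //.
  apply: leq_trans hit_gt1 (subset_leq_card _).
  by rewrite hitK_setU1; case: ifP => _; rewrite ?subsetUr.
rewrite -inK in aK; have hit_a : hitK D = [set a].
  by apply: fresh_hitK; rewrite // -card_gt0 ltnW.
by move: hit_gt1; rewrite hit_a cards1.
Qed.

End PotentialStep.

Lemma potential_step D v : ~~ (cnbhd e v \subset cover e D) -> potential (v |: D) < potential D.
Proof.
case: v => g h /subsetPn[[a u] fp fresh].
have [gI|gK] := boolP (g \in I); first exact: potential_step_I fp fresh gI.
rewrite -inK in gK; have [hit_gt1|] := ltnP 1 #|hitK D|.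
  exact: potential_step_K_many fp fresh hit_gt1.
rewrite leq_eqVlt ltnS leqn0 cards_eq0 => /orP[/cards1P[k hit_k]|/eqP hit0].
  exact: (potential_step_K_second fp fresh gK hit_k).
exact: potential_step_K_first fp fresh gK hit0.
Qed.

Lemma leq_size_potential s D : footprinting e (cover e D) s -> size s <= potential D.
Proof.
elim: s D => [|v s IH] D //= /andP[fresh fp].
by rewrite setUC -cover_setU1 in fp; exact: leq_ltn_trans (IH _ fp) (potential_step fresh).
Qed.

Lemma potential0 : potential set0 = #|I| * gammaH + nG eG I K.
Proof.
have hit0 : hitK set0 = set0.
  by apply/setP => k; rewrite !inE; apply/negbTE/andP => -[_ /existsP[u]]; rewrite inE.
rewrite /potential clique_term_set0 // -sum_nat_const; congr (_ + _); apply: eq_bigr => x _.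
by rewrite /layer_grundy cover0; congr (grundy_from _ _); apply/setP => u; rewrite !inE.
Qed.

Lemma grundy_lexprod_leq : grundy_from e set0 <= #|I| * gammaH + nG eG I K.
Proof.
rewrite -potential0; apply: grundy_from_leq => s fp.
by apply: leq_size_potential; rewrite cover0.
Qed.

Section LowerBound.
Variable t : seq U.
Hypothesis t_fp : footprinting eH set0 t.

Local Notation blocks J := [seq (x, y) | x <- enum J, y <- t].

Lemma footprinting_blocks (J : {set T}) X : J \subset I ->
  {in J, forall x, layer X x = set0} -> footprinting e X (blocks J).
Proof.
move=> sJI fresh; apply: (footprinting_allpairs eG_irr t_fp (enum_uniq _)).
  by move=> x y; rewrite !mem_enum => /(subsetP sJI) xI /(subsetP sJI) yI; rewrite indep_nadj.
by move=> x; rewrite mem_enum; exact: fresh.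
Qed.

Lemma size_blocks (J : {set T}) : size (blocks J) = #|J| * size t.
Proof. by rewrite size_allpairs -cardE. Qed.

Lemma lexprod_seq_nG0 : exists2 s, footprinting e set0 s & size s = #|I| * size t.
Proof.
exists (blocks I); last exact: size_blocks.
by apply: footprinting_blocks => // x _; apply/setP => u; rewrite !inE.
Qed.

Lemma lexprod_seq_nG1 : nG eG I K = 1 ->
  exists2 s, footprinting e set0 s & size s = #|I| * size t + 1.
Proof.
rewrite /nG; case: exists_inP => // -[v vK /exists_inP[w wK /eqP no_common]] _.
have [h0 _] := card_gt0P U_gt0.
pose I1 := I :\: onbhd eG w; pose I2 := I :&: onbhd eG w.
have [x xI vx] := K_nbr_in_I vK.
have vw : v != w.
  by apply: contra_eq_neq no_common => <-; apply/set0Pn; exists x; rewrite !inE vx xI.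
exists (blocks I1 ++ (v, h0) :: blocks I2); last first.
  rewrite size_cat /= !size_blocks -(cardsID (onbhd eG w) I) -/I1 -/I2; lia.
rewrite footprinting_cat footprinting_blocks ?subsetDl //=; last first.
  by move=> y _; apply/setP => u; rewrite !inE.
apply/andP; split.
  apply/subsetPn; exists (w, h0); first by rewrite mem_cnbhd_lexprod clique_adj.
  rewrite !inE /=; apply/negP => /cover_allpairs[y]; rewrite mem_enum !inE => /andP[wy yI].
  by rewrite eq_sym IK_neq //= eG_sym (negbTE wy).
apply: footprinting_blocks; first exact: subsetIl.
move=> y; rewrite !inE => /andP[yI wy]; apply/setP => u.
rewrite [LHS]inE !in_setU in_set0 mem_cnbhd_lexprod IK_neq // orbF in_set0 /=.
apply/norP; split.
  apply/negP => /cover_allpairs[z]; rewrite mem_enum !inE => /andP[wz zI].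
  by rewrite indep_nadj // orbF => /eqP yz; move: wz; rewrite -yz wy.
by apply/negP => vy; have := in_set0 y; rewrite -no_common !inE vy wy yI.
Qed.

End LowerBound.

Lemma grundy_lexprod_geq : #|I| * gammaH + nG eG I K <= grundy_from e set0.
Proof.
have [t t_fp <-] := grundy_from_witness eH set0.
have [nG0|nG1] : nG eG I K = 0 \/ nG eG I K = 1 by rewrite /nG; case: existsP; [right|left].
  by rewrite nG0 addn0; have [s fp <-] := lexprod_seq_nG0 t_fp; exact: leq_size_grundy_from.
by rewrite nG1; have [s fp <-] := lexprod_seq_nG1 t_fp nG1; exact: leq_size_grundy_from.
Qed.

Lemma grundy_from_lexprod_split : grundy_from e set0 = #|I| * gammaH + nG eG I K.
Proof. by apply/eqP; rewrite eqn_leq grundy_lexprod_leq grundy_lexprod_geq. Qed.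

End SplitLexprod.

Theorem corollary3 (T U : finType) (eG : rel T) (eH : rel U)
  (I K : {set T}) :
  simple_graph eG -> simple_graph eH ->
  0 < #|U| ->
  I :&: K = set0 -> I :|: K = [set: T] ->
  clique eG K -> independent eG I -> #|I| = alpha eG ->
  grundy_dom (lexprod eG eH) = #|I| * grundy_dom eH + nG eG I K.
Proof.
move=> eG_simple _ U_gt0 IK_disjoint IK_union K_clique I_indep I_max.
rewrite !grundy_domE; exact: grundy_from_lexprod_split.
Qed.
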